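(* Fix $i\in[n]$ such that $m_i=1$. Let $w\in W^i$, $\gamma,\gamma'\in M_i$ with $\gamma'\le\gamma$. Then $w(\gamma')\le w(\gamma)$.
   Context: $\Phi$ is a finite irreducible crystallographic root system with basis $\Pi=\{\alpha_1,\dots,\alpha_n\}$, positive roots $\Phi^+$, highest root $\theta=\sum_i m_i\alpha_i$, Weyl group $W$ with length $\ell$. On the root lattice, $x\le y$ iff $y-x$ is a nonnegative linear combination of positive roots. $M_i=\{\beta\in\Phi^+\mid\beta\ge\alpha_i\}$; $D_r(w)=\{\alpha\in\Pi\mid\ell(ws_\alpha)<\ell(w)\}$; $W^i=\{w\in W\mid D_r(w)\subseteq\{\alpha_i\}\}$. *)

From HB Require Import structures.
From mathcomp Require Import all_boot all_order all_algebra.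
From mathcomp Require Import reals.
Set Implicit Arguments. Unset Strict Implicit. Unset Printing Implicit Defensive.
Import Order.TTheory GRing.Theory Num.Theory.
Local Open Scope ring_scope.

Section RootSystems.
Variables (R : realType) (n : nat).
Notation V := 'rV[R]_n.

Definition dot (u v : V) : R := \sum_(k < n) u 0 k * v 0 k.

Definition refl (a v : V) : V := v - ((2 * dot v a) / dot a a) *: a.

Definition is_root_system (Phi : seq V) : Prop :=
  [/\ (0 : V) \notin Phi,
      (forall v : V, exists c : 'I_(size Phi) -> R,
          v = \sum_(k < size Phi) c k *: nth 0 Phi k),
      (forall a b, a \in Phi -> b \in Phi -> refl a b \in Phi),
      (forall a b, a \in Phi -> b \in Phi ->
          exists z : int, (2 * dot b a) / dot a a = z%:~R) &
      (forall a (c : R), a \in Phi -> c *: a \in Phi -> c = 1 \/ c = -1)].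

Definition irreducible_rs (Phi : seq V) : Prop :=
  forall P : pred V,
    (forall a b, a \in Phi -> b \in Phi -> P a -> ~~ P b -> dot a b = 0) ->
    (forall a, a \in Phi -> P a) \/ (forall a, a \in Phi -> ~~ P a).

Definition is_base (Phi : seq V) (alpha : 'I_n -> V) : Prop :=
  [/\ (forall j, alpha j \in Phi),
      (forall c : 'I_n -> R, \sum_(j < n) c j *: alpha j = 0 -> forall j, c j = 0) &
      (forall b, b \in Phi -> exists c : 'I_n -> int,
          b = \sum_(j < n) (c j)%:~R *: alpha j /\
          ((forall j, 0 <= c j) \/ (forall j, c j <= 0)))].

Definition pos_root (Phi : seq V) (alpha : 'I_n -> V) (b : V) : Prop :=
  b \in Phi /\ exists c : 'I_n -> int,
    (forall j, 0 <= c j) /\ b = \sum_(j < n) (c j)%:~R *: alpha j.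

Definition rle (Phi : seq V) (alpha : 'I_n -> V) (x y : V) : Prop :=
  exists c : 'I_(size Phi) -> R,
    [/\ (forall k, 0 <= c k),
        (forall k, c k != 0 -> pos_root Phi alpha (nth 0 Phi k)) &
        y - x = \sum_(k < size Phi) c k *: nth 0 Phi k].

Definition in_M (Phi : seq V) (alpha : 'I_n -> V) (i : 'I_n) (b : V) : Prop :=
  pos_root Phi alpha b /\ rle Phi alpha (alpha i) b.

Definition in_Weyl (Phi : seq V) (w : V -> V) : Prop :=
  exists s : seq V, (forall a, a \in s -> a \in Phi) /\
    w =1 foldr (fun a f => fun v => refl a (f v)) id s.

Definition sword (alpha : 'I_n -> V) (s : seq 'I_n) : V -> V :=
  foldr (fun j f => fun v => refl (alpha j) (f v)) id s.

Definition is_length (alpha : 'I_n -> V) (w : V -> V) (k : nat) : Prop :=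
  (exists s, size s = k /\ sword alpha s =1 w) /\
  (forall s, sword alpha s =1 w -> (k <= size s)%N).

Definition in_Dr (alpha : 'I_n -> V) (w : V -> V) (j : 'I_n) : Prop :=
  exists k k', [/\ is_length alpha (fun v => w (refl (alpha j) v)) k',
                   is_length alpha w k & (k' < k)%N].

Definition in_Wi (Phi : seq V) (alpha : 'I_n -> V) (i : 'I_n) (w : V -> V) : Prop :=
  in_Weyl Phi w /\ (forall j, in_Dr alpha w j -> alpha j = alpha i).

End RootSystems.

From HB Require Import structures.
From mathcomp Require Import all_boot all_order all_algebra.
From mathcomp Require Import reals.
From mathcomp Require Import ring lra zify.
From Stdlib Require Import Classical.
Set Implicit Arguments. Unset Strict Implicit. Unset Printing Implicit Defensive.
Import Order.TTheory GRing.Theory Num.Theory.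
Local Open Scope ring_scope.

(* Since m_i = 1 and alpha_i <= gamma <= theta, every root of M_i has
   alpha_i-coordinate exactly 1, so gamma - gamma' is a nonnegative
   combination of the simple roots alpha_j with j <> i.  For w in W^i each
   such w(alpha_j) is a positive root: otherwise the exchange condition would
   give ell(w s_j) < ell(w).  Hence w(gamma) - w(gamma') = w(gamma - gamma')
   is a nonnegative combination of positive roots. *)

Section InnerProduct.
Variables (R : realType) (n : nat).
Notation V := 'rV[R]_n.
Implicit Types (a u v x y : V).

Lemma dotC u v : dot u v = dot v u.
Proof. by apply: eq_bigr => k _; rewrite mulrC. Qed.

Lemma dotDl u v x : dot (u + v) x = dot u x + dot v x.
Proof. by rewrite /dot -big_split; apply: eq_bigr => k _; rewrite !mxE mulrDl. Qed.

Lemma dotZl c u x : dot (c *: u) x = c * dot u x.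
Proof. by rewrite /dot mulr_sumr; apply: eq_bigr => k _; rewrite !mxE mulrA. Qed.

Lemma dotNl u x : dot (- u) x = - dot u x.
Proof. by rewrite -scaleN1r dotZl mulN1r. Qed.

Lemma dotBl u v x : dot (u - v) x = dot u x - dot v x.
Proof. by rewrite dotDl dotNl. Qed.

Lemma dotZr c u x : dot x (c *: u) = c * dot x u.
Proof. by rewrite dotC dotZl dotC. Qed.

Lemma dotNr u x : dot x (- u) = - dot x u.
Proof. by rewrite dotC dotNl dotC. Qed.

Lemma dotBr u v x : dot x (u - v) = dot x u - dot x v.
Proof. by rewrite dotC dotBl !(dotC x). Qed.

Lemma dot_suml m (d : 'I_m -> R) (v : 'I_m -> V) x :
  dot (\sum_(k < m) d k *: v k) x = \sum_(k < m) d k * dot (v k) x.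
Proof.
elim: m d v => [|m IH] d v; first by rewrite !big_ord0 -(scale0r 0) dotZl mul0r.
by rewrite !big_ord_recr /= dotDl IH dotZl.
Qed.

Lemma dot_gt0 u : u != 0 -> 0 < dot u u.
Proof.
move=> u_neq0; rewrite lt_def sumr_ge0 ?andbT => [|k _]; last by rewrite -expr2 sqr_ge0.
apply: contra u_neq0; rewrite psumr_eq0 => [/allP u0|k _]; last by rewrite -expr2 sqr_ge0.
apply/eqP/rowP => k; rewrite mxE.
by have := u0 k (mem_index_enum _); rewrite -expr2 sqrf_eq0 => /eqP.
Qed.

Lemma refl_linear a : linear (refl a).
Proof.
move=> c u v; rewrite /refl dotDl dotZl.
have -> : 2 * (c * dot u a + dot v a) / dot a a =
          c * (2 * dot u a / dot a a) + 2 * dot v a / dot a a by ring.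
by rewrite scalerDl scalerBr scalerA addrACA opprD.
Qed.

HB.instance Definition _ a :=
  GRing.isLinear.Build R V V *:%R (refl a) (refl_linear a).

Lemma dot_refl a u v : a != 0 -> dot (refl a u) (refl a v) = dot u v.
Proof.
move=> /dot_gt0 /lt0r_neq0 aa_neq0.
rewrite /refl !(dotBl, dotBr, dotZl, dotZr) ?(dotC a u) ?(dotC a v).
by field.
Qed.

Lemma reflK a : a != 0 -> involutive (refl a).
Proof.
move=> /dot_gt0 /lt0r_neq0 aa_neq0 v; rewrite {1}/refl.
have -> : 2 * dot (refl a v) a / dot a a = - (2 * dot v a / dot a a).
  by rewrite /refl dotBl dotZl; field.
by rewrite scaleNr opprK /refl subrK.
Qed.

Lemma refl_self a : a != 0 -> refl a a = - a.
Proof.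
move=> /dot_gt0 /lt0r_neq0 aa_neq0; rewrite /refl.
have -> : 2 * dot a a / dot a a = 2 by field.
by rewrite scaler_nat mulr2n opprD addNKr.
Qed.

Lemma reflN a : refl (- a) =1 refl a.
Proof.
by move=> v; rewrite /refl dotNr dotNl dotNr opprK mulrN mulNr scalerN scaleNr opprK.
Qed.

Lemma isometry_refl (f : {linear V -> V}) :
  (forall x y, dot (f x) (f y) = dot x y) ->
  forall a v, f (refl a v) = refl (f a) (f v).
Proof. by move=> f_iso a v; rewrite /refl linearB linearZ /= !f_iso. Qed.

Lemma refl_conj a b v : a != 0 -> refl a (refl b v) = refl (refl a b) (refl a v).
Proof. by move=> a_neq0; apply: (@isometry_refl (refl a)) => x y; apply: dot_refl. Qed.

End InnerProduct.

Section SimpleRoots.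
Variables (R : realType) (n : nat) (Phi : seq 'rV[R]_n) (alpha : 'I_n -> 'rV[R]_n).
Notation V := 'rV[R]_n.
Hypothesis Phi_root_system : is_root_system Phi.
Hypothesis alpha_base : is_base Phi alpha.

Definition neg_root (b : V) := b \in Phi /\ exists c : 'I_n -> int,
  (forall j, c j <= 0) /\ b = \sum_(j < n) (c j)%:~R *: alpha j.

Lemma root_neq0 b : b \in Phi -> b != 0.
Proof.
by case: Phi_root_system => Phi0 _ _ _ _ bPhi; apply: contraNneq Phi0 => <-.
Qed.

Lemma refl_root a b : a \in Phi -> b \in Phi -> refl a b \in Phi.
Proof. by case: Phi_root_system => _ _ + _ _; apply. Qed.

Lemma refl_rootE a b : a \in Phi -> b \in Phi ->
  exists z : int, refl a b = b - z%:~R *: a.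
Proof.
case: Phi_root_system => _ _ _ cartan _ aPhi bPhi.
by have [z Ez] := cartan a b aPhi bPhi; exists z; rewrite /refl Ez.
Qed.

Lemma simple_root j : alpha j \in Phi.
Proof. by case: alpha_base. Qed.

Lemma simple_neq0 j : alpha j != 0.
Proof. exact: root_neq0 (simple_root j). Qed.

Lemma simple_coord_uniq (a b : 'I_n -> R) :
  \sum_(j < n) a j *: alpha j = \sum_(j < n) b j *: alpha j -> a =1 b.
Proof.
case: alpha_base => _ free _ Eab j; apply/eqP; rewrite -subr_eq0; apply/eqP.
apply: (free (fun k => a k - b k)).
by rewrite (eq_bigr _ (fun k _ => scalerBl _ _ _)) sumrB Eab subrr.
Qed.

Lemma sum_simple1 (f : 'I_n -> R) j : (forall k, k != j -> f k = 0) ->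
  \sum_(k < n) f k *: alpha k = f j *: alpha j.
Proof.
by move=> fj0; rewrite (bigD1 j) //= big1 ?addr0 // => k /fj0 ->; rewrite scale0r.
Qed.

Lemma simple_delta j : alpha j = \sum_(k < n) (k == j)%:R *: alpha k.
Proof. by rewrite (@sum_simple1 _ j) ?eqxx ?scale1r // => k /negbTE ->. Qed.

Lemma simple_inj : injective alpha.
Proof.
move=> j k Ejk; apply/eqP; have := simple_coord_uniq (etrans (esym (simple_delta j))
  (etrans Ejk (simple_delta k))) j.
by rewrite eqxx eq_sym; case: (k == j) => // /eqP; rewrite oner_eq0.
Qed.

Lemma root_pos_or_neg b : b \in Phi -> pos_root Phi alpha b \/ neg_root b.
Proof.
case: alpha_base => _ _ sign bPhi; have [c [Ec [c_ge0|c_le0]]] := sign b bPhi.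
- by left; split => //; exists c.
- by right; split => //; exists c.
Qed.

Lemma pos_root_not_neg b : pos_root Phi alpha b -> ~ neg_root b.
Proof.
move=> [bPhi [c [c_ge0 Ec]]] [_ [d [d_le0 Ed]]].
have Ecd := simple_coord_uniq (etrans (esym Ec) Ed).
have c0 j : c j = 0.
  by apply/eqP; rewrite eq_le c_ge0 andbT (intr_inj (Ecd j)) d_le0.
by move/eqP: (root_neq0 bPhi); apply; rewrite Ec big1 // => j _; rewrite c0 scale0r.
Qed.

Lemma simple_pos j : pos_root Phi alpha (alpha j).
Proof.
split; first exact: simple_root.
exists (fun k => (k == j)%:Z); split => [k|]; first by case: (k == j).
exact: simple_delta.
Qed.

Lemma refl_simple_coords j b (c : 'I_n -> int) (z : int) :
  b = \sum_(k < n) (c k)%:~R *: alpha k ->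
  b - z%:~R *: alpha j = \sum_(k < n) (c k - z * (k == j)%:Z)%:~R *: alpha k.
Proof.
move=> ->; rewrite [RHS](eq_bigr (fun k => (c k)%:~R *: alpha k -
  (z * (k == j)%:Z)%:~R *: alpha k)) => [|k _]; last by rewrite intrB scalerBl.
rewrite sumrB; congr (_ - _).
by rewrite (@sum_simple1 _ j) ?eqxx ?mulr1 // => k /negbTE ->; rewrite mulr0.
Qed.

(* s_j permutes the positive roots other than alpha_j: the reflected root
   keeps the coordinates of b outside j, and b is not a multiple of alpha_j
   since Phi is reduced. *)
Lemma refl_simple_pos j b : pos_root Phi alpha b -> b != alpha j ->
  pos_root Phi alpha (refl (alpha j) b).
Proof.
move=> [bPhi [c [c_ge0 Ec]]] b_neq.
have rbPhi := refl_root (simple_root j) bPhi.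
have [[_ rb_pos]|[_ [e [e_le0 Ee]]]] := root_pos_or_neg rbPhi; first by split.
have [z Ez] := refl_rootE (simple_root j) bPhi.
have Ece := simple_coord_uniq (etrans (esym Ee) (etrans Ez (refl_simple_coords j z Ec))).
have c0 k : k != j -> c k = 0.
  move=> /negbTE kj; have /intr_inj := Ece k; rewrite kj mulr0 subr0 => Ek.
  by apply/eqP; rewrite eq_le c_ge0 andbT -Ek e_le0.
have Eb : b = (c j)%:~R *: alpha j by rewrite Ec (@sum_simple1 _ j) // => k /c0 ->.
case: Phi_root_system => _ _ _ _ reduced.
have := reduced (alpha j) (c j)%:~R (simple_root j); rewrite -Eb => /(_ bPhi) [cj1|cjN1].
  by move: b_neq; rewrite Eb cj1 scale1r eqxx.
by have := c_ge0 j; rewrite -(ler0z R) cjN1; lra.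
Qed.

End SimpleRoots.

Section Words.
Variables (R : realType) (n : nat) (Phi : seq 'rV[R]_n) (alpha : 'I_n -> 'rV[R]_n).
Notation V := 'rV[R]_n.
Hypothesis Phi_root_system : is_root_system Phi.
Hypothesis alpha_base : is_base Phi alpha.

Lemma sword_linear s : linear (sword alpha s).
Proof. by elim: s => [//|j s IH] c u v /=; rewrite IH linearP. Qed.

HB.instance Definition _ s :=
  GRing.isLinear.Build R V V *:%R (sword alpha s) (sword_linear s).

Lemma sword_cat s1 s2 : sword alpha (s1 ++ s2) =1 sword alpha s1 \o sword alpha s2.
Proof. by elim: s1 => [//|j s1 IH] v /=; rewrite IH. Qed.

Lemma dot_sword s u v : dot (sword alpha s u) (sword alpha s v) = dot u v.
Proof.
elim: s => [//|j s IH] /=.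
by rewrite dot_refl ?IH ?(simple_neq0 Phi_root_system alpha_base).
Qed.

Lemma sword_refl s a v :
  sword alpha s (refl a v) = refl (sword alpha s a) (sword alpha s v).
Proof. exact: (@isometry_refl _ _ (sword alpha s) (dot_sword s)). Qed.

Lemma sword_root s b : b \in Phi -> sword alpha s b \in Phi.
Proof.
elim: s => [//|j s IH] bPhi /=.
by apply: refl_root (IH bPhi); [|exact: simple_root].
Qed.

(* A positive root b with (b, alpha_j) > 0 and b <> alpha_j has
   s_j b = b - z alpha_j positive with z > 0, so its height drops; such a j
   exists since (b, b) > 0. *)
Lemma pos_root_descent b (c : 'I_n -> int) :
  b \in Phi -> (forall k, 0 <= c k) -> b = \sum_(k < n) (c k)%:~R *: alpha k ->
  (exists j, b = alpha j) \/
  (exists j (e : 'I_n -> int), [/\ (forall k, 0 <= e k),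
      refl (alpha j) b = \sum_(k < n) (e k)%:~R *: alpha k,
      \sum_(k < n) e k <= \sum_(k < n) c k - 1 &
      refl (alpha j) b \in Phi]).
Proof.
move=> bPhi c_ge0 Ec.
have bb_gt0 := dot_gt0 (root_neq0 Phi_root_system bPhi).
have [j bj_gt0] : exists j, 0 < dot b (alpha j).
  apply/existsP; apply: contraTT bb_gt0; rewrite negb_exists => /forallP bj_le0.
  rewrite -leNgt {2}Ec dotC dot_suml; apply: sumr_le0 => k _.
  by rewrite mulr_ge0_le0 ?ler0z // dotC leNgt bj_le0.
have [->|b_neq] := eqVneq b (alpha j); first by left; exists j.
right; have jPhi := simple_root alpha_base j.
have b_pos : pos_root Phi alpha b by split => //; exists c.
have [_ [e [e_ge0 Ee]]] := refl_simple_pos Phi_root_system alpha_base b_pos b_neq.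
case: Phi_root_system => _ _ _ cartan _.
have [z Ez] := cartan (alpha j) b jPhi bPhi.
have z_gt0 : 0 < z.
  rewrite -(ltr0z R) -Ez divr_gt0 ?mulr_gt0 //.
  exact: dot_gt0 (simple_neq0 Phi_root_system alpha_base j).
have Er : refl (alpha j) b = b - z%:~R *: alpha j by rewrite /refl Ez.
have Ece := simple_coord_uniq alpha_base
  (etrans (esym (refl_simple_coords j z Ec)) (etrans (esym Er) Ee)).
have Ek k : e k = c k - z * (k == j)%:Z by apply/eqP; rewrite -(eqr_int R) Ece.
exists j, e; split => //; last exact: refl_root.
rewrite (eq_bigr _ (fun k _ => Ek k)) sumrB lerD2l lerN2.
rewrite (bigD1 j) //= big1 ?eqxx ?mulr1 ?addr0 -?gtz0_ge1 // => k /negbTE ->.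
by rewrite mulr0.
Qed.

(* Induction on the height, using s_b = s_j s_{s_j b} s_j. *)
Lemma pos_refl_sword (N : nat) b (c : 'I_n -> int) :
  b \in Phi -> (forall k, 0 <= c k) -> b = \sum_(k < n) (c k)%:~R *: alpha k ->
  \sum_(k < n) c k <= N%:Z -> exists s, sword alpha s =1 refl b.
Proof.
elim: N b c => [|N IH] b c bPhi c_ge0 Ec c_le;
  have [[j ->]|[j [e [e_ge0 Ee e_le rbPhi]]]] := pos_root_descent bPhi c_ge0 Ec;
  try by exists [:: j].
  have : 0 <= \sum_(k < n) e k by apply: sumr_ge0 => k _.
  by lia.
have [s Es] := IH _ e rbPhi e_ge0 Ee ltac:(lia).
exists (j :: s ++ [:: j]) => v /=.
have j_neq0 := simple_neq0 Phi_root_system alpha_base j.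
by rewrite sword_cat /= Es refl_conj // !reflK.
Qed.

Lemma refl_sword b : b \in Phi -> exists s, sword alpha s =1 refl b.
Proof.
move=> bPhi.
have [[_ [c [c_ge0 Ec]]]|[_ [c [c_le0 Ec]]]] := root_pos_or_neg alpha_base bPhi.
  apply: (pos_refl_sword (N := absz (\sum_(k < n) c k)) bPhi c_ge0 Ec).
  by rewrite abszE ler_norm.
have NbPhi : - b \in Phi.
  by rewrite -refl_self ?(root_neq0 Phi_root_system) ?refl_root.
have ENc : - b = \sum_(k < n) (- c k)%:~R *: alpha k.
  by rewrite Ec -sumrN; apply: eq_bigr => k _; rewrite intrN scaleNr.
have Nc_ge0 k : 0 <= - c k by rewrite oppr_ge0.
have [s Es] := pos_refl_sword (N := absz (\sum_(k < n) - c k)) NbPhi Nc_ge0 ENc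
  ltac:(by rewrite abszE ler_norm).
by exists s => v; rewrite Es reflN.
Qed.

Lemma Weyl_sword w : in_Weyl Phi w -> exists s, sword alpha s =1 w.
Proof.
move=> [bs [bsPhi Ew]]; suff [s Es] : exists s, sword alpha s =1
    foldr (fun a f => fun v => refl a (f v)) id bs by exists s => v; rewrite Es Ew.
elim: bs bsPhi {Ew} => [|b bs IH] bsPhi; first by exists [::].
have [s Es] := IH (fun a abs => bsPhi a (mem_behead (s := b :: bs) abs)).
have [sb Esb] := refl_sword (bsPhi b (mem_head _ _)).
by exists (sb ++ s) => v; rewrite sword_cat /= Es Esb.
Qed.

Lemma sword_length f : (exists s, sword alpha s =1 f) -> exists k, is_length alpha f k.
Proof.
move=> [s Es]; elim: {s}(size s) {-2}s (leqnn (size s)) Es => [|N IH] s s_le Es.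
  by exists 0%N; split => //; exists s; split => //; apply/eqP; rewrite -leqn0.
have [[s' [s'_le Es']]|no_short] :=
  classic (exists s', (size s' <= N)%N /\ sword alpha s' =1 f).
  exact: IH s'_le Es'.
exists (size s); split; first by exists s.
move=> s' Es'; rewrite leqNgt; apply/negP => s'_lt.
by apply: no_short; exists s'; split => //; lia.
Qed.

(* The exchange condition: if w(alpha_j) is negative for w = s_{t_1}...s_{t_k},
   some s_{t_l} sends the positive root s_{t_{l+1}}...s_{t_k}(alpha_j) to a
   negative one, which forces that root to be alpha_{t_l}, and s_{t_l} cancels
   against s_j. *)
Lemma sword_exchange j s : neg_root Phi alpha (sword alpha s (alpha j)) ->
  exists s', (size s' < size s)%N /\
    sword alpha s' =1 sword alpha s \o refl (alpha j).
Proof.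
elim: s => [|t s IH] wj_neg.
  by case: (pos_root_not_neg Phi_root_system alpha_base (simple_pos alpha_base j) wj_neg).
have sjPhi := sword_root s (simple_root alpha_base j).
have [sj_pos|sj_neg] := root_pos_or_neg alpha_base sjPhi; last first.
  have [s' [s'_lt Es']] := IH sj_neg.
  by exists (t :: s'); split => // v /=; rewrite Es'.
have [sjE|sj_neq] := eqVneq (sword alpha s (alpha j)) (alpha t).
  exists s; split => // v /=.
  by rewrite sword_refl sjE reflK // (simple_neq0 Phi_root_system alpha_base).
by case: (pos_root_not_neg Phi_root_system alpha_base
  (refl_simple_pos Phi_root_system alpha_base sj_pos sj_neq) wj_neg).
Qed.

Lemma Wi_simple_pos i w j : in_Wi Phi alpha i w -> j != i ->
  pos_root Phi alpha (w (alpha j)).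
Proof.
move=> [wW Dr_i] j_neq_i; have [s Es] := Weyl_sword wW.
have wjPhi : w (alpha j) \in Phi by rewrite -Es sword_root // simple_root.
have [//|wj_neg] := root_pos_or_neg alpha_base wjPhi; exfalso.
have [k k_len] := sword_length (ex_intro _ s Es).
have [[s1 [s1_size Es1]] _] := k_len.
rewrite -Es1 in wj_neg; have [s' [s'_lt Es']] := sword_exchange wj_neg.
have Ews' : sword alpha s' =1 w \o refl (alpha j) by move=> v; rewrite Es' /= Es1.
have [k' k'_len] := sword_length (ex_intro _ s' Ews').
have /Dr_i /(simple_inj alpha_base) /eqP : in_Dr alpha w j.
  exists k, k'; split => //.
  by rewrite -s1_size (leq_ltn_trans _ s'_lt) // (proj2 k'_len).
by rewrite (negbTE j_neq_i).
Qed.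

End Words.

Section Cones.
Variables (R : realType) (n : nat) (Phi : seq 'rV[R]_n) (alpha : 'I_n -> 'rV[R]_n).
Notation V := 'rV[R]_n.
Hypothesis alpha_base : is_base Phi alpha.

Section ConvexCone.
Variable C : V -> Prop.
Hypothesis C0 : C 0.
Hypothesis CD : forall x y, C x -> C y -> C (x + y).
Hypothesis CZ : forall c x, 0 <= c -> C x -> C (c *: x).

Lemma cone_sum m (c : 'I_m -> R) (v : 'I_m -> V) :
  (forall k, 0 <= c k) -> (forall k, c k != 0 -> C (v k)) ->
  C (\sum_(k < m) c k *: v k).
Proof.
elim: m c v => [|m IH] c v c_ge0 Cv; first by rewrite big_ord0.
rewrite big_ord_recr /=; apply: CD; first by apply: IH => // k /Cv.
by have [->|/Cv] := eqVneq (c ord_max) 0; [rewrite scale0r | apply: CZ].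
Qed.

End ConvexCone.

Definition simple_cone (x : V) :=
  exists d : 'I_n -> R, (forall j, 0 <= d j) /\ x = \sum_(j < n) d j *: alpha j.

(* [rle Phi alpha x y] unfolds to [pos_cone (y - x)]. *)
Definition pos_cone (x : V) := exists c : 'I_(size Phi) -> R,
  [/\ (forall k, 0 <= c k),
      (forall k, c k != 0 -> pos_root Phi alpha (nth 0 Phi k)) &
      x = \sum_(k < size Phi) c k *: nth 0 Phi k].

Lemma simple_cone_sum m (c : 'I_m -> R) (v : 'I_m -> V) :
  (forall k, 0 <= c k) -> (forall k, c k != 0 -> simple_cone (v k)) ->
  simple_cone (\sum_(k < m) c k *: v k).
Proof.
apply: cone_sum => [|_ _ [d [d_ge0 ->]] [e [e_ge0 ->]]|a _ a_ge0 [d [d_ge0 ->]]].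
- by exists (fun=> 0); split => //; rewrite big1 // => j _; rewrite scale0r.
- exists (fun j => d j + e j); split => [j|]; first by rewrite addr_ge0.
  by rewrite -big_split; apply: eq_bigr => j _; rewrite scalerDl.
- exists (fun j => a * d j); split => [j|]; first by rewrite mulr_ge0.
  by rewrite scaler_sumr; apply: eq_bigr => j _; rewrite scalerA.
Qed.

Lemma pos_cone_sum m (c : 'I_m -> R) (v : 'I_m -> V) :
  (forall k, 0 <= c k) -> (forall k, c k != 0 -> pos_cone (v k)) ->
  pos_cone (\sum_(k < m) c k *: v k).
Proof.
apply: cone_sum => [|_ _ [d [d_ge0 d_pos ->]] [e [e_ge0 e_pos ->]]|
                    a _ a_ge0 [d [d_ge0 d_pos ->]]].
- by exists (fun=> 0); split => [//|k|]; rewrite ?eqxx // big1 // => j _; rewrite scale0r.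
- exists (fun j => d j + e j); split => [j|k|]; first by rewrite addr_ge0.
    by have [dk0|/d_pos //] := eqVneq (d k) 0; rewrite dk0 add0r => /e_pos.
  by rewrite -big_split; apply: eq_bigr => j _; rewrite scalerDl.
- exists (fun j => a * d j); split => [j|k|]; first by rewrite mulr_ge0.
    by rewrite mulf_eq0 negb_or => /andP [_ /d_pos].
  by rewrite scaler_sumr; apply: eq_bigr => j _; rewrite scalerA.
Qed.

Lemma pos_root_cone b : pos_root Phi alpha b -> pos_cone b.
Proof.
move=> b_pos; have bPhi : b \in Phi by case: b_pos.
pose k0 := Ordinal (etrans (index_mem b Phi) bPhi).
exists (fun k => (k == k0)%:R); split => [k|k|]; first by case: (k == k0).
  by have [->|] := eqVneq k k0; rewrite ?eqxx //= nth_index.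
rewrite (bigD1 k0) //= big1 ?addr0 ?eqxx ?scale1r ?nth_index //.
by move=> k /negbTE ->; rewrite scale0r.
Qed.

Lemma rle_simple_cone x y : rle Phi alpha x y -> simple_cone (y - x).
Proof.
move=> [c [c_ge0 c_pos ->]]; apply: simple_cone_sum => // k /c_pos [_ [e [e_ge0 ->]]].
by exists (fun j => (e j)%:~R); split => // j; rewrite ler0z.
Qed.

Lemma rle_simple_coords x y (a b : 'I_n -> R) :
  x = \sum_(j < n) a j *: alpha j -> y = \sum_(j < n) b j *: alpha j ->
  rle Phi alpha x y -> forall j, 0 <= b j - a j.
Proof.
move=> -> -> /rle_simple_cone [d [d_ge0 Ed]] j.
have Ebad : \sum_(k < n) (b k - a k) *: alpha k = \sum_(k < n) d k *: alpha k.
  by rewrite -Ed -sumrB; apply: eq_bigr => k _; rewrite scalerBl.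
by rewrite (simple_coord_uniq alpha_base Ebad j).
Qed.

Lemma M_simple_coord i (theta gamma : V) (m : 'I_n -> R) :
  (forall b, b \in Phi -> rle Phi alpha b theta) ->
  theta = \sum_(j < n) m j *: alpha j -> m i = 1 ->
  in_M Phi alpha i gamma ->
  exists g : 'I_n -> R, gamma = \sum_(j < n) g j *: alpha j /\ g i = 1.
Proof.
move=> theta_max Etheta mi1 [[gPhi [c [_ Eg]]] ai_le_g].
exists (fun j => (c j)%:~R); split => //.
have := rle_simple_coords (simple_delta alpha i) Eg ai_le_g i.
have := rle_simple_coords Eg Etheta (theta_max _ gPhi) i.
by rewrite mi1 eqxx /=; lra.
Qed.

End Cones.

Theorem proposition5p5 (R : realType) (n : nat) (Phi : seq 'rV[R]_n)
    (alpha : 'I_n -> 'rV[R]_n) (theta : 'rV[R]_n) (m : 'I_n -> R) (i : 'I_n)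
    (w : 'rV[R]_n -> 'rV[R]_n) (gamma gamma' : 'rV[R]_n) :
  is_root_system Phi -> irreducible_rs Phi -> is_base Phi alpha ->
  theta \in Phi -> (forall b, b \in Phi -> rle Phi alpha b theta) ->
  theta = \sum_(j < n) m j *: alpha j ->
  m i = 1 ->
  in_Wi Phi alpha i w ->
  in_M Phi alpha i gamma -> in_M Phi alpha i gamma' ->
  rle Phi alpha gamma' gamma ->
  rle Phi alpha (w gamma') (w gamma).
Proof.
move=> HR _ HB _ theta_max Etheta mi1 w_Wi g_M g'_M g'_le_g.
have [s Es] := Weyl_sword HR HB (proj1 w_Wi).
have [g [Eg gi1]] := M_simple_coord HB theta_max Etheta mi1 g_M.
have [g' [Eg' g'i1]] := M_simple_coord HB theta_max Etheta mi1 g'_M.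
have Egg' : gamma - gamma' = \sum_(j < n) (g j - g' j) *: alpha j.
  by rewrite Eg Eg' -sumrB; apply: eq_bigr => j _; rewrite scalerBl.
change (pos_cone Phi alpha (w gamma - w gamma')).
rewrite -!Es -linearB Egg' linear_sum; under eq_bigr do rewrite linearZ /=.
apply: pos_cone_sum => [|j]; first exact: rle_simple_coords Eg' Eg g'_le_g.
have [->|j_neq_i _] := eqVneq j i; first by rewrite gi1 g'i1 subrr eqxx.
by rewrite Es; apply: pos_root_cone (Wi_simple_pos HR HB w_Wi j_neq_i).
Qed.
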